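(* Every instance of Crossing Cost Multi-Agent Routing (CC-MAR) admits a (pure) Nash equilibrium. Moreover, any Nash dynamics (sequence of improving moves) starting from any strategy profile reaches a Nash equilibrium after at most $w_{\max}k^2|E|$ steps, where $w_{\max}$ is the maximum edge weight, $k$ the number of agents, and $|E|$ the number of undirected edges.
   Context: A mixed graph $G=(V,E,A)$ has a set $E\subseteq\binom{V}{2}$ of undirected edges and a set $A\subseteq V\times V$ of arcs; each edge $e\in E$ has a positive integer weight $w_e$. A path is a sequence of pairwise distinct vertices $v_1,\dots,v_m$ such that for each $i<m$ either $\{v_i,v_{i+1}\}\in E$ or $(v_i,v_{i+1})\in A$; it traverses an edge $\{v_i,v_{i+1}\}\in E$ in the direction from $v_i$ to $v_{i+1}$. A CC-MAR instance is $\Gamma=(G,\mathcal{T})$ where $\mathcal{T}$ is a multiset of $k$ pairs $(s_i,t_i)\in V\times V$ (agents $i\in[k]$); it is assumed that for each $i$ an $s_i$-$t_i$ path exists. A strategy profile is $\mathcal{P}=\{P_1,\dots,P_k\}$ with $P_i$ an $s_i$-$t_i$ path. For an edge $\{u,v\}\in E$ let $x_{uv}$ be the number of paths of $\mathcal{P}$ traversing it from $u$ to $v$. The individual cost of agent $i$ is $\mathrm{cost}_{\mathcal{P}}(P_i)=\sum w_{uv}x_{vu}$, summed over the edges $\{u,v\}\in E$ that $P_i$ traverses from $u$ to $v$ (i.e., the weighted number of other paths using that edge in the opposite direction). The total cost is $\mathrm{cost}(\mathcal{P})=\sum_{\{u,v\}\in E}w_{uv}x_{uv}x_{vu}$. A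 Nash equilibrium is a profile in which no agent can strictly decrease its individual cost by replacing its own path by another $s_i$-$t_i$ path while the others stay fixed. A Nash dynamics step replaces the path of some agent by one giving it strictly smaller individual cost. *)

From mathcomp Require Import all_boot all_order.
Set Implicit Arguments. Unset Strict Implicit. Unset Printing Implicit Defensive.

Section CCMAR.
Variable V : finType.
(* undirected edges: 2-element subsets of V *)
Variable E : {set {set V}}.
Variable A : rel V.
(* edge weights (only values on E matter) *)
Variable w : {set V} -> nat.

Definition step (u v : V) : bool := ([set u; v] \in E) || A u v.

Definition is_path (s t : V) (p : seq V) : bool :=
  if p is x :: q then [&& x == s, last x q == t, path step x q & uniq p]
  else false.

Definition traverses (p : seq V) (u v : V) : bool :=
  ([set u; v] \in E) && ((u, v) \in zip p (behead p)).

Definition profile (k : nat) := 'I_k -> seq V.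

Definition xcount k (P : profile k) (u v : V) : nat :=
  \sum_(i < k) (traverses (P i) u v : nat).

Definition cost k (P : profile k) (i : 'I_k) : nat :=
  \sum_(e <- zip (P i) (behead (P i)) | [set e.1; e.2] \in E)
     w [set e.1; e.2] * xcount P e.2 e.1.

Definition valid_profile k (T : 'I_k -> V * V) (P : profile k) : Prop :=
  forall i, is_path (T i).1 (T i).2 (P i).

Definition upd k (P : profile k) (i : 'I_k) (p : seq V) : profile k :=
  fun j => if j == i then p else P j.

Definition nash_eq k (T : 'I_k -> V * V) (P : profile k) : Prop :=
  valid_profile T P /\
  forall (i : 'I_k) (p : seq V), is_path (T i).1 (T i).2 p ->
    cost P i <= cost (upd P i p) i.

Definition nash_step k (T : 'I_k -> V * V) (P Q : profile k) : Prop :=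
  exists (i : 'I_k) (p : seq V),
    [/\ is_path (T i).1 (T i).2 p, Q = upd P i p & cost Q i < cost P i].

Definition wmax : nat := \max_(e in E) w e.
End CCMAR.

From mathcomp Require Import all_boot all_order.
From mathcomp Require Import zify.
From Stdlib Require Import Classical.
Set Implicit Arguments. Unset Strict Implicit. Unset Printing Implicit Defensive.

(* The game has an exact potential.  Let Psi P be the sum over ordered pairs (u, v)
   of w_uv * x_uv * x_vu, i.e. twice the total cost.  Separating agent i from the
   others gives Psi P = R_i + 2 * cost_i, where R_i does not depend on the path of i
   (a simple path never uses an edge in both directions).  Hence every improving move
   lowers Psi by at least 2, while 0 <= Psi <= 2 w_max k^2 |E| because x_uv <= k.
   This bounds the length of Nash dynamics, and a profile admitting no improving
   move, which exists for the same reason, is a Nash equilibrium. *)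

Section PotentialArgument.
Variables (S : Type) (valid : S -> Prop) (move : S -> S -> Prop).
Variables (phi : S -> nat) (d : nat).
Hypothesis move_valid : forall x y, valid x -> move x y -> valid y.
Hypothesis move_potential : forall x y, valid x -> move x y -> phi y + d <= phi x.

Lemma move_chain_bound n (Q : nat -> S) :
  valid (Q 0) -> (forall j, j < n -> move (Q j) (Q j.+1)) -> d * n <= phi (Q 0).
Proof.
move=> valid0 chain.
suff /(_ n (leqnn n)) [_] : forall j, j <= n -> valid (Q j) /\ phi (Q j) + d * j <= phi (Q 0).
  by lia.
elim=> [|j IHj] le_jn; first by rewrite muln0 addn0.
have [valid_j phi_j] := IHj (ltnW le_jn).
have := move_potential valid_j (chain j le_jn).
by split; [exact: move_valid (chain j le_jn) | lia].
Qed.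

Lemma exists_move_free x :
  0 < d -> valid x -> exists y, valid y /\ forall z, ~ move y z.
Proof.
move=> d_gt0; have [m] := ubnP (phi x); elim: m x => // m IHm x lt_phi valid_x.
case: (classic (exists z, move x z)) => [[z xz] | no_move]; last first.
  by exists x; split=> // z xz; apply: no_move; exists z.
apply: (IHm z); last exact: move_valid xz.
by have := move_potential valid_x xz; lia.
Qed.

End PotentialArgument.

Lemma mem_zip_behead_snd (T : eqType) (p : seq T) u v :
  (u, v) \in zip p (behead p) -> v \in behead p.
Proof.
move=> uv_in; rewrite -(@unzip2_zip _ _ p (behead p)) ?size_behead ?leq_pred //.
exact: (map_f snd uv_in).
Qed.

Lemma uniq_zip_behead_asym (T : eqType) (p : seq T) u v :
  uniq p -> (u, v) \in zip p (behead p) -> (v, u) \notin zip p (behead p).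
Proof.
elim: p => [|x [|y q] IH] //; rewrite [uniq _]/= => /andP [x_notin uniq_yq] /=.
have [x_neq_y x_notin_q] : x != y /\ x \notin q by move: x_notin; rewrite inE negb_or => /andP.
rewrite !in_cons => /orP [/eqP [-> ->] | uv_in]; apply/norP; split.
- by rewrite xpair_eqE negb_and eq_sym x_neq_y.
- by apply: contra x_notin_q => /mem_zip_behead_snd.
- by apply: contra x_notin_q => /eqP [<- _]; apply: mem_zip_behead_snd uv_in.
- exact: IH.
Qed.

Lemma card_pairs_spanning_le2 (T : finType) (e : {set T}) :
  #|e| = 2 -> #|[set x : T * T | [set x.1; x.2] == e]| <= 2.
Proof.
move=> /eqP /cards2P [a [b [a_neq_b ->]]].
apply: (@leq_trans #|[set (a, b); (b, a)]|); last by rewrite cards2 ltnS leq_b1.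
apply/subset_leq_card/subsetP => -[x y]; rewrite inE => /eqP /= xy_ab.
have x_neq_y : x != y.
  apply/eqP => x_eq_y; move: (cards2 a b).
  by rewrite a_neq_b -xy_ab x_eq_y setUid cards1 => /eqP.
have [x_ab y_ab] : x \in [set a; b] /\ y \in [set a; b].
  by rewrite -xy_ab set21 set22.
move: x_neq_y; rewrite !in_set2.
by case/set2P: x_ab => ->; case/set2P: y_ab => ->; rewrite ?eqxx ?orbT.
Qed.

Section CrossingPotential.
Variables (V : finType) (E : {set {set V}}) (w : {set V} -> nat) (k : nat).
Implicit Types (P : profile V k) (i : 'I_k) (p : seq V).

Lemma traverses_asym p u v :
  uniq p -> traverses E p u v -> traverses E p v u = false.
Proof.
move=> uniq_p /andP [_ uv_in].
by rewrite /traverses (negbTE (uniq_zip_behead_asym uniq_p uv_in)) andbF.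
Qed.

Lemma xcount_le P u v : xcount E P u v <= k.
Proof.
rewrite -[X in _ <= X]card_ord -sum1_card.
by apply: leq_sum => j _; rewrite leq_b1.
Qed.

Definition others_count P i u v := \sum_(j < k | j != i) (traverses E (P j) u v : nat).

Lemma xcount_others P i u v :
  xcount E P u v = traverses E (P i) u v + others_count P i u v.
Proof. by rewrite /xcount (bigD1 i). Qed.

Lemma others_count_upd P i p u v : others_count (upd P i p) i u v = others_count P i u v.
Proof. by apply: eq_bigr => j j_neq_i; rewrite /upd (negbTE j_neq_i). Qed.

Lemma cost_othersE P i : uniq (P i) ->
  cost E w P i = \sum_(x : V * V)
    traverses E (P i) x.1 x.2 * (w [set x.1; x.2] * others_count P i x.2 x.1).
Proof.
move=> uniq_Pi; rewrite /cost big_mkcond big_uniq ?zip_uniql //= big_mkcond /=.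
apply: eq_bigr => -[u v] _ /=; rewrite (xcount_others P i v u).
case trav_uv: (traverses E (P i) u v); last first.
  by move: trav_uv; rewrite /traverses; case: (_ \in E); case: (_ \in _).
by move: trav_uv (traverses_asym uniq_Pi trav_uv) => /andP [-> ->] ->; rewrite mul1n.
Qed.

(* Each edge is counted in both orientations, so this is twice the total cost. *)
Definition crossing_potential P := \sum_(x : V * V)
  w [set x.1; x.2] * (xcount E P x.1 x.2 * xcount E P x.2 x.1).

Definition others_potential P i := \sum_(x : V * V)
  w [set x.1; x.2] * (others_count P i x.1 x.2 * others_count P i x.2 x.1).

Lemma others_potential_upd P i p : others_potential (upd P i p) i = others_potential P i.
Proof. by apply: eq_bigr => x _; rewrite !others_count_upd. Qed.

Lemma crossing_potentialE P i : uniq (P i) ->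
  crossing_potential P = others_potential P i + 2 * cost E w P i.
Proof.
move=> uniq_Pi; rewrite cost_othersE //.
pose t (x : V * V) : nat := traverses E (P i) x.1 x.2.
pose G (x : V * V) := t x * (w [set x.1; x.2] * others_count P i x.2 x.1).
have flipK : involutive (fun x : V * V => (x.2, x.1)) by case.
have G_flip : \sum_(x : V * V) G (x.2, x.1) = \sum_x G x.
  by rewrite [RHS](reindex_inj (inv_inj flipK)).
transitivity (\sum_(x : V * V) (w [set x.1; x.2] *
    (others_count P i x.1 x.2 * others_count P i x.2 x.1) + (G x + G (x.2, x.1)))).
  apply: eq_bigr => -[u v] _; rewrite /G /t /= [[set v; u]]setUC !(xcount_others P i).
  case trav_uv: (traverses E (P i) u v).
    by rewrite (traverses_asym uniq_Pi trav_uv); nia.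
  by nia.
by rewrite big_split big_split /= G_flip addnn -mul2n.
Qed.

Lemma crossing_potential_improve P i p :
  uniq (P i) -> uniq p -> cost E w (upd P i p) i < cost E w P i ->
  crossing_potential (upd P i p) + 2 <= crossing_potential P.
Proof.
move=> uniq_Pi uniq_p improves.
have uniq_upd : uniq (upd P i p i) by rewrite /upd eqxx.
rewrite (crossing_potentialE uniq_Pi) (crossing_potentialE uniq_upd).
by rewrite others_potential_upd; lia.
Qed.

Lemma crossing_potential_le P : (forall e, e \in E -> #|e| = 2) ->
  crossing_potential P <= 2 * (wmax E w * k ^ 2 * #|E|).
Proof.
move=> E_doubletons.
rewrite /crossing_potential (bigID (fun x : V * V => [set x.1; x.2] \in E)) /=.
rewrite [X in _ + X]big1 ?addn0; last first.
  move=> x x_notin_E; rewrite /xcount big1 ?mul0n ?muln0 // => j _.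
  by rewrite /traverses (negbTE x_notin_E).
rewrite (partition_big (fun x : V * V => [set x.1; x.2]) (fun e => e \in E)) //=.
apply: (@leq_trans (\sum_(e in E) 2 * (wmax E w * k ^ 2))); last first.
  by rewrite sum_nat_const mulnCA [#|E| * _]mulnC.
apply: leq_sum => e e_in_E.
apply: (@leq_trans (\sum_(x : V * V | [set x.1; x.2] == e) wmax E w * k ^ 2)).
  rewrite big_mkcond [X in _ <= X]big_mkcond /=; apply: leq_sum => x _.
  rewrite andbC; case: eqP => // _; case: ifP => // x_in_E.
  rewrite expnS expn1 leq_mul ?leq_mul ?xcount_le //.
  exact: leq_bigmax_cond.
by rewrite sum_nat_cond_const leq_mul2r card_pairs_spanning_le2 ?orbT ?E_doubletons.
Qed.

End CrossingPotential.

Section NashDynamics.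
Variables (V : finType) (E : {set {set V}}) (A : rel V) (w : {set V} -> nat).
Variables (k : nat) (T : 'I_k -> V * V).
Implicit Types P Q : profile V k.

Lemma is_path_uniq s t p : is_path E A s t p -> uniq p.
Proof. by case: p => //= x q /and4P []. Qed.

Lemma nash_step_valid P Q :
  valid_profile E A T P -> nash_step E A w T P Q -> valid_profile E A T Q.
Proof. by move=> valid_P [i [p [path_p -> _]]] j; rewrite /upd; case: eqP => [-> | _]. Qed.

Lemma nash_step_potential P Q :
  valid_profile E A T P -> nash_step E A w T P Q ->
  crossing_potential E w Q + 2 <= crossing_potential E w P.
Proof.
move=> valid_P [i [p [path_p -> improves]]].
exact: crossing_potential_improve (is_path_uniq (valid_P i)) (is_path_uniq path_p) improves.
Qed.

Lemma nash_eq_of_no_step P :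
  valid_profile E A T P -> (forall Q, ~ nash_step E A w T P Q) -> nash_eq E A w T P.
Proof.
move=> valid_P no_step; split=> // i p path_p; rewrite leqNgt; apply/negP => improves.
by apply: (no_step (upd P i p)); exists i, p.
Qed.

End NashDynamics.

Theorem mainTheorem1 (V : finType) (E : {set {set V}}) (A : rel V)
    (w : {set V} -> nat) (k : nat) (T : 'I_k -> V * V) :
  (forall e, e \in E -> #|e| = 2) ->
  (forall e, e \in E -> 0 < w e) ->
  (forall i, exists p, is_path E A (T i).1 (T i).2 p) ->
  (exists P : profile V k, nash_eq E A w T P) /\
  (forall (n : nat) (Q : nat -> profile V k),
     valid_profile E A T (Q 0) ->
     (forall j, j < n -> nash_step E A w T (Q j) (Q j.+1)) ->
     n <= wmax E w * k ^ 2 * #|E|).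
Proof.
move=> E_doubletons _ paths_exist.
have step_valid := @nash_step_valid V E A w k T.
have step_potential := @nash_step_potential V E A w k T.
split.
  pose P0 : profile V k := fun i => xchoose (paths_exist i).
  have valid_P0 : valid_profile E A T P0 := fun i => xchooseP (paths_exist i).
  have [P [valid_P no_step]] := exists_move_free step_valid step_potential isT valid_P0.
  by exists P; apply: nash_eq_of_no_step.
move=> n Q valid_Q0 chain.
have := move_chain_bound step_valid step_potential valid_Q0 chain.
have := crossing_potential_le w (Q 0) E_doubletons.
lia.
Qed.
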